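(* Let $b\ge 1$ and let $D_1(l),\dots,D_b(l)$ and $D_1(l+1),\dots,D_b(l+1)$ be real numbers such that, for each level $m\in\{l,l+1\}$, the numbers $D_1(m),\dots,D_b(m)$ are nonzero with pairwise distinct absolute values, and $D_i(l+1)\le D_i(l)$ for all $i$. For $m\in\{l,l+1\}$ let $T^+(m)=\sum_{i=1}^b R_i(m)\mathbf{1}\{D_i(m)>0\}$, where $R_i(m)$ is the rank of $|D_i(m)|$ among $\{|D_1(m)|,\dots,|D_b(m)|\}$ (rank $1$ for the smallest), and let $P(m)=\{i:D_i(m)>0\}$. If $P(l+1)\subsetneq P(l)$, then $T^+(l+1)<T^+(l)$.
   Context: $T^+(m)$ is the Wilcoxon signed-rank (positive rank sum) statistic of the values $D_1(m),\dots,D_b(m)$. *)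

From HB Require Import structures.
From mathcomp Require Import all_boot all_order all_algebra.
From mathcomp Require Import reals.
Set Implicit Arguments. Unset Strict Implicit. Unset Printing Implicit Defensive.
Import Order.TTheory GRing.Theory Num.Theory.
Local Open Scope ring_scope.

Definition absrank (R : realDomainType) (b : nat) (D : 'I_b -> R) (i : 'I_b) : nat :=
  #|[set j : 'I_b | `|D j| <= `|D i|]|.

Local Close Scope ring_scope.
Definition Tplus (R : realDomainType) (b : nat) (D : 'I_b -> R) : nat :=
  \sum_(i < b | (0 < D i)%R) absrank D i.

Local Open Scope ring_scope.
Definition Ppos (R : realDomainType) (b : nat) (D : 'I_b -> R) : {set 'I_b} :=
  [set i : 'I_b | 0 < D i].

(* Write T+ = #{(i, j) | 0 < D i, |D j| <= |D i|}.  When the |D i| are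
   distinct, a pair {i, j} with i <> j is counted through its entry of larger
   absolute value only, and exactly when D i + D j > 0; each positive D i is
   also counted once through (i, i).  Hence
   2 T+ = #{(i, j) | 0 < D i + D j} + #|P|.  Lowering the values can only
   lose pairs (i, j), and here it strictly shrinks P. *)

From HB Require Import structures.
From mathcomp Require Import all_boot all_order all_algebra.
From mathcomp Require Import reals.
From mathcomp Require Import lra.
Import Order.TTheory GRing.Theory Num.Theory.
Local Open Scope ring_scope.

Lemma norm_dominant_addr_gt0 (R : realDomainType) (x y : R) :
  `|y| < `|x| -> (0 < x + y) = (0 < x).
Proof.
have [hx|hx] := lerP 0 x; rewrite ?(ger0_norm hx) ?(ltr0_norm hx);
  have [hy|hy] := lerP 0 y; rewrite ?(ger0_norm hy) ?(ltr0_norm hy);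
  move=> hxy; apply/idP/idP => ?; lra.
Qed.

Lemma dominant_pos_pair (R : realDomainType) (x y : R) : `|x| != `|y| ->
  addn ((0 < x) && (`|y| <= `|x|)) ((0 < y) && (`|x| <= `|y|)) = (0 < x + y) :> nat.
Proof.
case: (ltgtP `|x| `|y|) => // hxy _.
- by rewrite andbF andbT addrC norm_dominant_addr_gt0.
- by rewrite andbT andbF addn0 norm_dominant_addr_gt0.
Qed.

Section PairCount.
Variables (R : realDomainType) (b : nat).
Implicit Types D : 'I_b -> R.

Definition npos_pair_sums D : nat :=
  (\sum_(i < b) \sum_(j < b) (0 < D i + D j)%R)%N.

Lemma Tplus_pairs D :
  (Tplus D = \sum_(i < b) \sum_(j < b) ((0 < D i) && (`|D j| <= `|D i|))%R)%N.
Proof.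
rewrite /Tplus big_mkcond; apply: eq_bigr => i _.
case: (0 < D i); last by rewrite big1.
by rewrite /absrank -sum1_card big_mkcond; apply: eq_bigr => j _; rewrite inE.
Qed.

Lemma card_Ppos_pairs D :
  (#|Ppos D| = \sum_(i < b) \sum_(j < b) ((i == j) && (0 < D i))%R)%N.
Proof.
rewrite /Ppos -sum1_card big_mkcond; apply: eq_bigr => i _.
rewrite (bigD1 i) //= eqxx big1 ?addn0 ?inE //.
by move=> j; rewrite eq_sym => /negbTE ->.
Qed.

Lemma Tplus_double D : (forall i j, i != j -> `|D i| != `|D j|) ->
  (Tplus D * 2 = npos_pair_sums D + #|Ppos D|)%N.
Proof.
move=> distinct_abs.
rewrite muln2 -addnn {2}Tplus_pairs exchange_big Tplus_pairs card_Ppos_pairs.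
rewrite -!big_split; apply: eq_bigr => i _; rewrite -!big_split; apply: eq_bigr => j _.
have [<-|ij] := eqVneq i j; last by rewrite /= addn0 dominant_pos_pair ?distinct_abs.
by rewrite lexx andbT -mulr2n pmulrn_lgt0.
Qed.

Lemma npos_pair_sums_le D D' : (forall i, D' i <= D i) ->
  (npos_pair_sums D' <= npos_pair_sums D)%N.
Proof.
move=> le_D; apply: leq_sum => i _; apply: leq_sum => j _.
have [pos'|//] := boolP (0 < D' i + D' j).
by rewrite lt0b (lt_le_trans pos') ?lerD.
Qed.

End PairCount.

Theorem mainTheorem4 (R : realType) (b : nat) (Dl Dl1 : 'I_b -> R) :
  (1 <= b)%N ->
  (forall i, Dl i != 0) ->
  (forall i, Dl1 i != 0) ->
  (forall i j, i != j -> `|Dl i| != `|Dl j|) ->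
  (forall i j, i != j -> `|Dl1 i| != `|Dl1 j|) ->
  (forall i, Dl1 i <= Dl i) ->
  Ppos Dl1 \proper Ppos Dl ->
  (Tplus Dl1 < Tplus Dl)%N.
Proof.
move=> _ _ _ distinct_l distinct_l1 le_D proper_P.
rewrite -(ltn_pmul2r (isT : 0 < 2)%N) Tplus_double // Tplus_double //.
by rewrite -addnS leq_add ?npos_pair_sums_le ?proper_card.
Qed.
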